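(* Let $t\le k$ and $n$ be positive integers. If there exists an orthogonal array OA$(t,k,n)$, then there exists a large set of orthogonal arrays LOA$(t,k,n)$.
   Context: An orthogonal array OA$(t,k,n)$ is an $n^t\times k$ matrix with entries from $\mathbb{Z}_n$ such that in the submatrix formed by any $t$ columns each ordered $t$-tuple over $\mathbb{Z}_n$ occurs exactly once as a row. A large set of orthogonal arrays LOA$(t,k,n)$ is a set of $n^{k-t}$ orthogonal arrays OA$(t,k,n)$ such that each vector of length $k$ over $\mathbb{Z}_n$ occurs as a row in exactly one of them. *)

From mathcomp Require Import all_boot.
Set Implicit Arguments. Unset Strict Implicit. Unset Printing Implicit Defensive.

(* Entries are taken from 'I_n, identified with Z_n = {0,...,n-1}
   (only the symbol set matters; no ring structure is used). *)

Definition array (t k n : nat) := 'I_(n ^ t) -> {ffun 'I_k -> 'I_n}.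

(* Orthogonal array OA(t,k,n): for every choice of t distinct columns
   (given as an injective map c : 'I_t -> 'I_k), every ordered t-tuple
   u over Z_n occurs exactly once as a row of the corresponding submatrix. *)
Definition is_OA (t k n : nat) (A : array t k n) : Prop :=
  forall c : 'I_t -> 'I_k, injective c ->
  forall u : {ffun 'I_t -> 'I_n},
    #|[set r : 'I_(n ^ t) | [ffun j => A r (c j)] == u]| = 1.

Definition is_LOA (t k n : nat) (L : 'I_(n ^ (k - t)) -> array t k n) : Prop :=
  (forall i, is_OA (L i)) /\
  forall v : {ffun 'I_k -> 'I_n},
    #|[set i : 'I_(n ^ (k - t)) | [exists r : 'I_(n ^ t), L i r == v]]| = 1.

From mathcomp Require Import all_boot ssralg zmodp.
Set Implicit Arguments. Unset Strict Implicit. Unset Printing Implicit Defensive.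
Import GRing.Theory.

(* View Z_n as the additive group 'I_n and write k = t + d.  Adding a fixed
   vector to every row of an OA(t,k,n) A permutes the t-tuples seen in any t
   columns, so it gives again an OA.  The n^d translates of A by the vectors
   (0,w), w in Z_n^d, form a large set: v lies in the translate by (0,w) iff
   v - (0,w) is a row r of A; the first t columns force r to be the unique row
   of A agreeing with v there, and then w = v_tail - (A r)_tail.  Nothing here
   needs t > 0; n > 0 is what makes 'I_n a group. *)

Lemma OA_rowP (t k n : nat) (A : array t k n) (c : 'I_t -> 'I_k)
    (u : {ffun 'I_t -> 'I_n}) :
  is_OA A -> injective c ->
  exists r0, forall r, (forall j, A r (c j) = u j) <-> r = r0.
Proof.
move=> oaA inj_c; have /eqP/cards1P[r0 Er0] := oaA c inj_c u.
exists r0 => r; move/setP: Er0 => /(_ r); rewrite !inE => Er.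
split=> [E | r_r0 j].
  by apply/eqP; rewrite -Er; apply/eqP/ffunP => j; rewrite ffunE.
by move: Er; rewrite r_r0 eqxx => /eqP/ffunP/(_ j); rewrite ffunE.
Qed.

Lemma reindex_LOA (t k n : nat) (I : finType) (F : I -> array t k n) :
  #|I| = n ^ (k - t) ->
  (forall i, is_OA (F i)) ->
  (forall v, #|[set i | [exists r, F i r == v]]| = 1) ->
  exists L : 'I_(n ^ (k - t)) -> array t k n, is_LOA L.
Proof.
move=> cardI oaF partF; set g := fun i => enum_val (cast_ord (esym cardI) i).
have g_bij : bijective g.
  exists (fun x => cast_ord cardI (enum_rank x)) => i.
    by rewrite /g enum_valK cast_ordKV.
  by rewrite /g cast_ordK enum_rankK.
exists (F \o g); split=> [i | v]; first exact: oaF.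
rewrite -(partF v) -(on_card_preimset (onW_bij _ g_bij)).
by apply: eq_card => i; rewrite !inE.
Qed.

Local Open Scope ring_scope.

Section Translates.
Variables t k m : nat.
Local Notation n := m.+1.

Definition translate (A : array t k n) (s : {ffun 'I_k -> 'I_n}) :
  array t k n := fun r => A r + s.

Lemma translateE (A : array t k n) s r j : translate A s r j = A r j + s j.
Proof. exact: ffunE. Qed.

Lemma translate_OA (A : array t k n) s : is_OA A -> is_OA (translate A s).
Proof.
move=> oaA c inj_c u; rewrite -(oaA c inj_c [ffun j => u j - s (c j)]).
apply: eq_card => r; rewrite !inE.
apply/eqP/eqP => /ffunP E; apply/ffunP => j; have := E j; rewrite !ffunE.
  by move=> <-; rewrite addrK.
by move=> ->; rewrite subrK.
Qed.

End Translates.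

Section ZeroHead.
Variables t d m : nat.
Local Notation n := m.+1.

Definition zero_head (w : {ffun 'I_d -> 'I_n}) : {ffun 'I_(t + d) -> 'I_n} :=
  [ffun j => if split j is inr j' then w j' else 0].

Lemma zero_head_lshift w j : zero_head w (lshift d j) = 0.
Proof. by rewrite ffunE (unsplitK (inl _ j)). Qed.

Lemma zero_head_rshift w j : zero_head w (rshift t j) = w j.
Proof. by rewrite ffunE (unsplitK (inr _ j)). Qed.

Lemma zero_head_translates_partition (A : array t (t + d) n) v :
  is_OA A ->
  #|[set w | [exists r, translate A (zero_head w) r == v]]| = 1%N.
Proof.
move=> oaA.
have [r0 Er0] := OA_rowP [ffun j => v (lshift d j)] oaA (@lshift_inj t d).
have head_r0 j : A r0 (lshift d j) = v (lshift d j).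
  by have /Er0/(_ j) := erefl r0; rewrite ffunE.
apply/eqP/cards1P; exists [ffun j => v (rshift t j) - A r0 (rshift t j)].
apply/setP => w; rewrite !inE.
apply/existsP/eqP => [[r /eqP Ev] | ->].
  have r_r0 : r = r0.
    by apply/Er0 => j; rewrite ffunE -Ev translateE zero_head_lshift addr0.
  subst r; apply/ffunP => j.
  by rewrite ffunE -Ev translateE zero_head_rshift [A r0 _ + _]addrC addrK.
exists r0; apply/eqP/ffunP => j; rewrite translateE.
case: (split_ordP j) => j' ->.
  by rewrite zero_head_lshift addr0 head_r0.
by rewrite zero_head_rshift ffunE addrC subrK.
Qed.

End ZeroHead.

Local Close Scope ring_scope.

Theorem theorem3 (t k n : nat) :
  0 < t -> t <= k -> 0 < n ->
  (exists A : array t k n, is_OA A) ->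
  exists L : 'I_(n ^ (k - t)) -> array t k n, is_LOA L.
Proof.
move=> _ t_le_k; have {t_le_k}[d ->] : exists d, k = t + d.
  by exists (k - t); rewrite subnKC.
case: n => [//|m] _ [A oaA].
have card_shifts : #|{ffun 'I_d -> 'I_m.+1}| = m.+1 ^ (t + d - t).
  by rewrite card_ffun !card_ord addKn.
apply: (reindex_LOA (F := fun w => translate A (zero_head t w)) card_shifts).
  by move=> w; apply: translate_OA.
by move=> v; apply: zero_head_translates_partition.
Qed.
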